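(* Let $M$ be an $n$-counter Minsky machine and $k_1,\dots,k_n$ non-negative integers, and suppose $M$ can go from the initial configuration $(L_1,k_1,\dots,k_n)$ to the halting configuration $(L_0,0,\dots,0)$. Then there exists a tree-like Horn program $P$ which is a strong solution to the sequent $$l_1\otimes r_1^{k_1}\otimes\cdots\otimes r_n^{k_n},\ !\Phi_M,\ !\mathcal{K}\ \vdash\ l_0.$$
   Context: An $n$-counter Minsky machine $M$ has counters $x_1,\dots,x_n$ with non-negative integer values and a finite list of instructions labelled by labels $L_0,L_1,\dots$, each of one of the forms: (1) $L_i: x_m:=x_m+1$; goto $L_j$; (2) $L_i: x_m:=x_m-1$; goto $L_j$; (3) $L_i$: if $x_m>0$ then goto $L_j$; (4) $L_i$: if $x_m=0$ then goto $L_j$; (5) $L_0$: halt; where $i\ge 1$. A configuration is $(L,c_1,\dots,c_n)$; a computation is a finite sequence of configurations each obtained from the previous by applying an instruction of $M$ (an instruction at $L_i$ applies only in a configuration with label $L_i$; type (2) requires $x_m\ge1$, type (3) requires $x_m>0$, type (4) requires $x_m=0$). Encoding: distinct propositional literals $r_1,\dots,r_n$, $l_0,l_1,\dots$ (one per label), $\kappa_1,\dots,\kappa_n$. $r^k$ denotes the tensor of $k$ copies of $r$ (omitted when $k=0$). Instruction $I$ of type (1)–(4) gives: $\varphi_{(1)}=l_i\multimap(l_j\otimes r_m)$, $\varphi_{(2)}=(l_i\otimes r_m)\multimap l_j$, $\varphi_{(3)}=(l_i\otimes r_m)\multimap(l_j\otimes r_m)$, $\varphi_{(4)}=l_i\multimap(l_j\oplus\kappa_m)$.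 $\Phi_M$ is the multiset of $\varphi_I$ over the instructions $I$ of $M$ of types (1)–(4). $\mathcal{K}=\bigcup_{m=1}^n\mathcal{K}_m$, where $\mathcal{K}_m$ consists of $\kappa_m\multimap l_0$ and $(\kappa_m\otimes r_i)\multimap\kappa_m$ for all $i\neq m$. A tree-like Horn program is a finite rooted tree (each vertex at most two children) with edges labelled by Horn implications $X\multimap Y$ ($X,Y$ tensor products of one or more literals, $\otimes$ commutative and associative), such that each vertex with two outgoing edges has them labelled $X\multimap Y_1$, $X\multimap Y_2$ with the same $X$. For a product $W$: $\mathrm{OUT}(P,W,\text{root})=W$; for an edge $(v,w)$ labelled $X\multimap Y$, if $\mathrm{OUT}(P,W,v)$ equals $X\otimes V$ as multisets for some (possibly empty) product $V$, then $\mathrm{OUT}(P,W,w)=Y\otimes V$, else undefined. The formula used on an edge out of a one-child vertex is its label; on each edge out of a two-child vertex with labels $X\multimap Y_1$, $X\multimap Y_2$ it is $X\multimap(Y_1\oplus Y_2)$. $P$ is a strong solution to $W,\Delta,!\Gamma\vdash Z$ if every terminal vertex $w$ has $\mathrm{OUT}(P,W,w)$ defined and equal as a multiset to $Z$, every edge's used formula lies in $\Gamma$ or $\Delta$, and on every root-to-terminal path each formula of $\Delta$ (with multiplicity) is used exactly once. (Here $\Delta$ is empty.) *)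

From Stdlib Require Import List Permutation Arith Relations.
Import ListNotations.

(* Labels L_i are represented by their index i : nat; counters x_m by m : nat
   (1 <= m <= n). *)
Inductive instr : Type :=
| IInc  (i m j : nat)
| IDec  (i m j : nat)
| IJnz  (i m j : nat)
| IJz   (i m j : nat)
| IHalt.

Record minsky : Type := Minsky { mn : nat ; minstrs : list instr }.

Definition instr_wf (n : nat) (I : instr) : Prop :=
  match I with
  | IInc i m _ | IDec i m _ | IJnz i m _ | IJz i m _ => 1 <= i /\ 1 <= m <= n
  | IHalt => True
  end.

Definition minsky_wf (M : minsky) : Prop :=
  forall I, In I (minstrs M) -> instr_wf (mn M) I.

Definition config : Type := (nat * (nat -> nat))%type.

Definition upd (c : nat -> nat) (m v : nat) : nat -> nat :=
  fun x => if Nat.eqb x m then v else c x.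

Definition instr_step (I : instr) (a b : config) : Prop :=
  match I with
  | IInc i m j => fst a = i /\ fst b = j /\ snd b = upd (snd a) m (snd a m + 1)
  | IDec i m j => fst a = i /\ fst b = j /\ 1 <= snd a m
                  /\ snd b = upd (snd a) m (snd a m - 1)
  | IJnz i m j => fst a = i /\ fst b = j /\ 0 < snd a m /\ snd b = snd a
  | IJz  i m j => fst a = i /\ fst b = j /\ snd a m = 0 /\ snd b = snd a
  | IHalt => False
  end.

Definition mstep (M : minsky) (a b : config) : Prop :=
  exists I, In I (minstrs M) /\ instr_step I a b.

Definition reaches_halt (M : minsky) (k : nat -> nat) : Prop :=
  exists c, clos_refl_trans_1n config (mstep M) (1, k) (0, c)
            /\ forall m, 1 <= m <= mn M -> c m = 0.

Inductive lit : Type :=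
| r   (m : nat)
| l   (i : nat)
| kap (m : nat).

(* A tensor product of literals, as a multiset: a list up to permutation. *)
Definition product := list lit.

(* The formulas that can be "used" on an edge of a tree-like Horn program:
   X -o Y, and X -o (Y1 (+) Y2). *)
Inductive hformula : Type :=
| HImp   (X Y : product)
| HImpOr (X Y1 Y2 : product).

Definition hf_eq (f g : hformula) : Prop :=
  match f, g with
  | HImp X Y, HImp X' Y' => Permutation X X' /\ Permutation Y Y'
  | HImpOr X Y1 Y2, HImpOr X' Y1' Y2' =>
      Permutation X X' /\ Permutation Y1 Y1' /\ Permutation Y2 Y2'
  | _, _ => False
  end.

Definition phi (I : instr) : list hformula :=
  match I with
  | IInc i m j => [HImp [l i] [l j; r m]]
  | IDec i m j => [HImp [l i; r m] [l j]]
  | IJnz i m j => [HImp [l i; r m] [l j; r m]]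
  | IJz  i m j => [HImpOr [l i] [l j] [kap m]]
  | IHalt => []
  end.

Definition PhiM (M : minsky) : list hformula := flat_map phi (minstrs M).

Definition inK (n : nat) (f : hformula) : Prop :=
  exists m, 1 <= m <= n /\
    (f = HImp [kap m] [l 0] \/
     exists i, 1 <= i <= n /\ i <> m /\ f = HImp [kap m; r i] [kap m]).

Definition inGamma (M : minsky) (f : hformula) : Prop :=
  exists g, (In g (PhiM M) \/ inK (mn M) g) /\ hf_eq f g.

(* A rooted tree, each vertex with 0, 1 or 2 children; edges labelled by
   Horn implications X -o Y; the two edges out of a binary vertex are
   labelled X -o Y1 and X -o Y2 (same X). *)
Inductive hprog : Type :=
| PLeaf
| PNode1 (X Y : product) (t : hprog)
| PNode2 (X Y1 Y2 : product) (t1 t2 : hprog).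

Fixpoint hprog_wf (P : hprog) : Prop :=
  match P with
  | PLeaf => True
  | PNode1 X Y t => X <> [] /\ Y <> [] /\ hprog_wf t
  | PNode2 X Y1 Y2 t1 t2 =>
      X <> [] /\ Y1 <> [] /\ Y2 <> [] /\ hprog_wf t1 /\ hprog_wf t2
  end.

Fixpoint out_ok (Gam : hformula -> Prop) (P : hprog) (W Z : product) : Prop :=
  match P with
  | PLeaf => Permutation W Z
  | PNode1 X Y t =>
      Gam (HImp X Y) /\
      exists V, Permutation W (X ++ V) /\ out_ok Gam t (Y ++ V) Z
  | PNode2 X Y1 Y2 t1 t2 =>
      Gam (HImpOr X Y1 Y2) /\
      exists V, Permutation W (X ++ V) /\
                out_ok Gam t1 (Y1 ++ V) Z /\ out_ok Gam t2 (Y2 ++ V) Z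
  end.

(* P is a strong solution to  W, !Gamma |- Z  (Delta empty). *)
Definition strong_solution (Gam : hformula -> Prop) (P : hprog) (W Z : product)
  : Prop := hprog_wf P /\ out_ok Gam P W Z.

Definition rpow (m k : nat) : product := repeat (r m) k.

Definition init_product (n : nat) (k : nat -> nat) : product :=
  l 1 :: flat_map (fun m => rpow m (k m)) (seq 1 n).

(* Read the computation backwards.  A configuration (L_i, c) is encoded by the
   product l_i (x) r_1^{c_1} (x) ... (x) r_n^{c_n}; every instruction of type
   (1)-(3) rewrites the encoding of a configuration into that of its successor
   by one Horn step, so a one-child edge extends a program for the successor.
   A zero test branches: the l_j branch continues the computation, while the
   kappa_m branch is valid precisely because x_m = 0 leaves no r_m in the
   product, so K_m can erase every other r_i and then turn kappa_m into l_0. *)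

From Stdlib Require Import List Permutation Arith Relations Lia.
Import ListNotations.

Definition counters (s : list nat) (c : nat -> nat) : product :=
  flat_map (fun m => rpow m (c m)) s.

Definition config_product (n : nat) (a : config) : product :=
  l (fst a) :: counters (seq 1 n) (snd a).

Lemma counters_ext s c c' :
  (forall m, In m s -> c m = c' m) -> counters s c = counters s c'.
Proof.
  induction s as [|x s IH]; intros Hcc'; simpl; [reflexivity|].
  rewrite Hcc' by now left. f_equal. apply IH. intros m Hm. apply Hcc'. now right.
Qed.

Lemma counters_zero s c : (forall m, In m s -> c m = 0) -> counters s c = [].
Proof.
  induction s as [|x s IH]; intros Hc; simpl; [reflexivity|].
  rewrite Hc by now left. apply IH. intros m Hm. apply Hc. now right.
Qed.

Lemma in_counters s c y :
  In y (counters s c) -> exists m, y = r m /\ In m s /\ c m <> 0.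
Proof.
  unfold counters. intros Hy. apply in_flat_map in Hy as [m [Hm Hy]].
  exists m. unfold rpow in Hy. split; [now apply repeat_spec in Hy|].
  split; [exact Hm|]. intros Hc. now rewrite Hc in Hy.
Qed.

Lemma counters_succ s c c' m : NoDup s -> In m s ->
  (forall x, x <> m -> c' x = c x) -> c' m = S (c m) ->
  Permutation (counters s c') (r m :: counters s c).
Proof.
  induction s as [|x s IH]; intros Hnd Hm Hother Hsucc; [destruct Hm|].
  inversion Hnd as [|? ? Hx Hnd']; subst. simpl.
  destruct (Nat.eq_dec x m) as [->|Hxm].
  - rewrite Hsucc, (counters_ext s c' c); [reflexivity|].
    intros y Hy. apply Hother. intros ->. contradiction.
  - destruct Hm as [->|Hm]; [contradiction|].
    rewrite Hother by exact Hxm.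
    rewrite IH by assumption. apply Permutation_sym, Permutation_middle.
Qed.

Lemma upd_same c m v : upd c m v m = v.
Proof. unfold upd. now rewrite Nat.eqb_refl. Qed.

Lemma upd_other c m v x : x <> m -> upd c m v x = c x.
Proof. unfold upd. intros Hxm. now apply Nat.eqb_neq in Hxm as ->. Qed.

Lemma counters_upd_inc n c m : 1 <= m <= n ->
  Permutation (counters (seq 1 n) (upd c m (c m + 1)))
              (r m :: counters (seq 1 n) c).
Proof.
  intros Hm. apply counters_succ.
  - apply seq_NoDup.
  - apply in_seq. lia.
  - apply upd_other.
  - rewrite upd_same. lia.
Qed.

Lemma counters_upd_dec n c m : 1 <= m <= n -> 1 <= c m ->
  Permutation (counters (seq 1 n) c)
              (r m :: counters (seq 1 n) (upd c m (c m - 1))).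
Proof.
  intros Hm Hc. apply counters_succ.
  - apply seq_NoDup.
  - apply in_seq. lia.
  - intros x Hxm. now rewrite upd_other.
  - rewrite upd_same. lia.
Qed.

Lemma out_ok_perm Gam P W W' Z :
  Permutation W W' -> out_ok Gam P W Z -> out_ok Gam P W' Z.
Proof.
  intros HW. destruct P; simpl.
  - intros HZ. now rewrite <- HW.
  - intros [HG [V [HV Ht]]]. split; [exact HG|]. exists V. now rewrite <- HW.
  - intros [HG [V [HV Ht]]]. split; [exact HG|]. exists V. now rewrite <- HW.
Qed.

Lemma strong_solution_perm Gam P W W' Z :
  Permutation W W' -> strong_solution Gam P W Z -> strong_solution Gam P W' Z.
Proof.
  intros HW [Hwf Hout]. split; [exact Hwf|]. exact (out_ok_perm _ _ _ _ _ HW Hout).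
Qed.

Lemma strong_solution_node1 Gam X Y V P W Z :
  Gam (HImp X Y) -> X <> [] -> Y <> [] -> Permutation W (X ++ V) ->
  strong_solution Gam P (Y ++ V) Z ->
  strong_solution Gam (PNode1 X Y P) W Z.
Proof.
  intros HG HX HY HW [Hwf Hout]. split; simpl; [tauto|].
  split; [exact HG|]. now exists V.
Qed.

Lemma strong_solution_node2 Gam X Y1 Y2 V P1 P2 W Z :
  Gam (HImpOr X Y1 Y2) -> X <> [] -> Y1 <> [] -> Y2 <> [] ->
  Permutation W (X ++ V) ->
  strong_solution Gam P1 (Y1 ++ V) Z -> strong_solution Gam P2 (Y2 ++ V) Z ->
  strong_solution Gam (PNode2 X Y1 Y2 P1 P2) W Z.
Proof.
  intros HG HX HY1 HY2 HW [Hwf1 Hout1] [Hwf2 Hout2]. split; simpl; [tauto|].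
  split; [exact HG|]. now exists V.
Qed.

Lemma inGamma_phi M I f : In I (minstrs M) -> In f (phi I) -> inGamma M f.
Proof.
  intros HI Hf. exists f. split.
  - left. apply in_flat_map. eauto.
  - destruct f; simpl; auto.
Qed.

Lemma inGamma_kappa_halt M m : 1 <= m <= mn M -> inGamma M (HImp [kap m] [l 0]).
Proof.
  intros Hm. exists (HImp [kap m] [l 0]). simpl. split; [|auto].
  right. exists m. auto.
Qed.

Lemma inGamma_kappa_erase M m i : 1 <= m <= mn M -> 1 <= i <= mn M -> i <> m ->
  inGamma M (HImp [kap m; r i] [kap m]).
Proof.
  intros Hm Hi Him. exists (HImp [kap m; r i] [kap m]). simpl. split; [|auto].
  right. exists m. split; [exact Hm|]. right. exists i. auto.
Qed.

Lemma kappa_solution M m V : 1 <= m <= mn M ->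
  (forall y, In y V -> exists i, y = r i /\ 1 <= i <= mn M /\ i <> m) ->
  exists P, strong_solution (inGamma M) P (kap m :: V) [l 0].
Proof.
  intros Hm. induction V as [|y V IH]; intros HV.
  - exists (PNode1 [kap m] [l 0] PLeaf).
    apply strong_solution_node1 with (V := []); try discriminate.
    + now apply inGamma_kappa_halt.
    + reflexivity.
    + split; simpl; auto.
  - destruct (HV y (or_introl eq_refl)) as [i [-> [Hi Him]]].
    destruct IH as [P HP]; [intros; apply HV; now right|].
    exists (PNode1 [kap m; r i] [kap m] P).
    apply strong_solution_node1 with (V := V); try discriminate.
    + now apply inGamma_kappa_erase.
    + reflexivity.
    + exact HP.
Qed.

Section Computation.

Variable M : minsky.
Hypothesis M_wf : minsky_wf M.

Definition solvable (a : config) : Prop :=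
  exists P, strong_solution (inGamma M) P (config_product (mn M) a) [l 0].

Lemma halting_solvable c :
  (forall m, 1 <= m <= mn M -> c m = 0) -> solvable (0, c).
Proof.
  intros Hc. exists PLeaf. split; [exact I|]. cbn [out_ok].
  unfold config_product. rewrite counters_zero; [reflexivity|].
  intros m Hm. apply in_seq in Hm. apply Hc. lia.
Qed.

Lemma zero_test_kappa_solvable c m :
  1 <= m <= mn M -> c m = 0 ->
  exists P, strong_solution (inGamma M) P
              (kap m :: counters (seq 1 (mn M)) c) [l 0].
Proof.
  intros Hm Hcm. apply kappa_solution; [exact Hm|].
  intros y Hy. apply in_counters in Hy as [i [-> [Hi Hci]]].
  apply in_seq in Hi. exists i. repeat split; try lia.
  intros ->. contradiction.
Qed.

Lemma mstep_solvable a b : mstep M a b -> solvable b -> solvable a.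
Proof.
  intros [I [HI Hstep]] [P HP]. pose proof (M_wf I HI) as HIwf.
  destruct a as [i c], b as [j c']. unfold config_product in *.
  destruct I as [? m ?|? m ?|? m ?|? m ?|]; simpl in Hstep, HIwf, HP;
    try contradiction.
  - destruct Hstep as [<- [<- ->]].
    exists (PNode1 [l i] [l j; r m] P).
    apply strong_solution_node1 with (V := counters (seq 1 (mn M)) c);
      try discriminate.
    + eapply inGamma_phi; [exact HI | now left].
    + reflexivity.
    + refine (strong_solution_perm _ _ _ _ _ _ HP).
      constructor. now apply counters_upd_inc.
  - destruct Hstep as [<- [<- [Hcm ->]]].
    exists (PNode1 [l i; r m] [l j] P).
    apply strong_solution_node1
      with (V := counters (seq 1 (mn M)) (upd c m (c m - 1))); try discriminate.
    + eapply inGamma_phi; [exact HI | now left].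
    + constructor. now apply counters_upd_dec.
    + exact HP.
  - destruct Hstep as [<- [<- [Hcm ->]]].
    assert (Hdec : Permutation (counters (seq 1 (mn M)) c)
                     (r m :: counters (seq 1 (mn M)) (upd c m (c m - 1))))
      by (apply counters_upd_dec; [tauto | lia]).
    exists (PNode1 [l i; r m] [l j; r m] P).
    apply strong_solution_node1
      with (V := counters (seq 1 (mn M)) (upd c m (c m - 1))); try discriminate.
    + eapply inGamma_phi; [exact HI | now left].
    + constructor. exact Hdec.
    + refine (strong_solution_perm _ _ _ _ _ _ HP).
      constructor. now apply Permutation_sym.
  - destruct Hstep as [<- [<- [Hcm ->]]].
    destruct (zero_test_kappa_solvable c m) as [Q HQ]; [tauto | exact Hcm |].
    exists (PNode2 [l i] [l j] [kap m] P Q).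
    apply strong_solution_node2 with (V := counters (seq 1 (mn M)) c);
      try discriminate.
    + eapply inGamma_phi; [exact HI | now left].
    + reflexivity.
    + exact HP.
    + exact HQ.
Qed.

Lemma computation_solvable a b :
  clos_refl_trans_1n config (mstep M) a b -> solvable b -> solvable a.
Proof.
  induction 1 as [|a y b Hstep _ IH]; intros Hb; [exact Hb|].
  apply mstep_solvable with y; [exact Hstep|]. now apply IH.
Qed.

End Computation.

Theorem lemma2 (M : minsky) (k : nat -> nat) :
  minsky_wf M ->
  reaches_halt M k ->
  exists P : hprog,
    strong_solution (inGamma M) P (init_product (mn M) k) [l 0].
Proof.
  intros Hwf [c [Hcomp Hc]].
  exact (computation_solvable M Hwf (1, k) (0, c) Hcomp (halting_solvable M c Hc)).
Qed.
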